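(* Let $(\mathbf{L},\mathbf{R})\in\mathcal{P}_{\mathsf N}$ be centered (so both matrices have the same number $m$ of columns), and let $f:\{0,1\}^m\to\{0,1\}^m$. Then $f$ is a contraction map for $(\mathbf{L},\mathbf{R})$ if and only if $f$ is an inclusion dominance map for $(\mathbf{L},\mathbf{R})$. In particular, a centered pair admits a contraction map if and only if it admits an inclusion dominance map.
   Context: $\mathcal{P}_{\mathsf N}$ denotes the set of pairs $(\mathbf{L},\mathbf{R})$ of $(0,1)$-matrices, $\mathbf{L}$ of size $(\mathsf N+1)\times m_L$ and $\mathbf{R}$ of size $(\mathsf N+1)\times m_R$, such that some index $p\in[\mathsf N+1]$ has row $p$ of $\mathbf{L}$ and row $p$ of $\mathbf{R}$ both zero. $\mathbf{A}_{(i)}$ denotes the $i$-th row of $\mathbf{A}$; $e$ the all-ones row vector; $|v|=\sum_k|v_k|$; $|x-x'|$ the Hamming distance; for vectors, $v\le w$ means componentwise; $u^T$ is the transpose (column vector). The pair is balanced if $|\mathbf{L}_{(i)}|=|\mathbf{R}_{(i)}|$ for all $i$, and centered if it is balanced and for some $i$ we have $\mathbf{L}_{(i)}=e$ and $\mathbf{R}_{(i)}=e$. A contraction map is $f:\{0,1\}^{m_L}\to\{0,1\}^{m_R}$ with $f(\mathbf{L}_{(i)})=\mathbf{R}_{(i)}$ for all $i\in[\mathsf N+1]$ and $|x-x'|\ge|f(x)-f(x')|$ for all $x,x'$. A dominance map is $f:\{0,1\}^{m_L}\to\{0,1\}^{m_R}$ such that for all $u$, $|u|=|f(u)|$ and $\mathbf{L}u^T\le\mathbf{R}f(u)^T$.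 An inclusion dominance map is a dominance map $f$ such that $u'\le u$ implies $f(u')\le f(u)$. *)

(* (0,1)-matrices are boolean matrices 'M[bool]_(N.+1, m);
   vectors in {0,1}^m are boolean row vectors 'rV[bool]_m. *)
From mathcomp Require Import all_boot all_order all_algebra.
Set Implicit Arguments. Unset Strict Implicit. Unset Printing Implicit Defensive.

Definition wt (m : nat) (v : 'rV[bool]_m) : nat := #|[set k | v ord0 k]|.

Definition hdist (m : nat) (x x' : 'rV[bool]_m) : nat := #|[set k | x ord0 k != x' ord0 k]|.

Definition vle (m : nat) (u' u : 'rV[bool]_m) : Prop := forall k, u' ord0 k -> u ord0 k.

(* (A u^T)_i for a 0/1 matrix A and 0/1 vector u (integer matrix-vector product) *)
Definition mxv (n m : nat) (A : 'M[bool]_(n, m)) (u : 'rV[bool]_m) (i : 'I_n) : nat :=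
  #|[set k | A i k && u ord0 k]|.

Definition zero_row (m : nat) (v : 'rV[bool]_m) : Prop := forall k, v ord0 k = false.
Definition ones_row (m : nat) (v : 'rV[bool]_m) : Prop := forall k, v ord0 k = true.

Definition inP (N mL mR : nat) (L : 'M[bool]_(N.+1, mL)) (R : 'M[bool]_(N.+1, mR)) : Prop :=
  exists p : 'I_N.+1, zero_row (row p L) /\ zero_row (row p R).

Definition balanced (N mL mR : nat) (L : 'M[bool]_(N.+1, mL)) (R : 'M[bool]_(N.+1, mR)) : Prop :=
  forall i : 'I_N.+1, wt (row i L) = wt (row i R).

Definition centered (N mL mR : nat) (L : 'M[bool]_(N.+1, mL)) (R : 'M[bool]_(N.+1, mR)) : Prop :=
  balanced L R /\ exists i : 'I_N.+1, ones_row (row i L) /\ ones_row (row i R).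

Definition contraction_map (N mL mR : nat) (L : 'M[bool]_(N.+1, mL)) (R : 'M[bool]_(N.+1, mR))
  (f : 'rV[bool]_mL -> 'rV[bool]_mR) : Prop :=
  (forall i : 'I_N.+1, f (row i L) = row i R) /\
  (forall x x' : 'rV[bool]_mL, hdist (f x) (f x') <= hdist x x').

Definition dominance_map (N mL mR : nat) (L : 'M[bool]_(N.+1, mL)) (R : 'M[bool]_(N.+1, mR))
  (f : 'rV[bool]_mL -> 'rV[bool]_mR) : Prop :=
  forall u : 'rV[bool]_mL, wt u = wt (f u) /\ (forall i, mxv L u i <= mxv R (f u) i).

Definition inclusion_dominance_map (N mL mR : nat) (L : 'M[bool]_(N.+1, mL))
  (R : 'M[bool]_(N.+1, mR)) (f : 'rV[bool]_mL -> 'rV[bool]_mR) : Prop :=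
  dominance_map L R f /\ (forall u' u, vle u' u -> vle (f u') (f u)).

From mathcomp Require Import all_boot all_order all_algebra.
From mathcomp Require Import zify.

(* For 0/1 vectors |x - y| = |x| + |y| - 2|x /\ y|.  A contraction fixing the
   zero vector and the all-ones vector therefore preserves weights (compare the
   distances to both), hence also overlaps |x /\ y|: overlaps with rows of L give
   dominance, and overlaps with comparable vectors give monotonicity.
   Conversely a weight-preserving monotone map sends the meet z of x, x' below
   f x and f x', so |f x - f x'| <= (|x| - |z|) + (|x'| - |z|) = |x - x'|;
   dominance on u = L_(i) forces f (L_(i)) to contain, hence equal, R_(i). *)

Section BooleanVectors.
Context {m : nat}.
Implicit Types x y z : 'rV[bool]_m.

Definition meet x y : 'rV[bool]_m := \row_k (x ord0 k && y ord0 k).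

Lemma card_set_sum (P : pred 'I_m) : #|[set k | P k]| = \sum_k P k.
Proof.
by rewrite -sum1_card big_mkcond /=; apply: eq_bigr => k _; rewrite inE; case: (P k).
Qed.

Lemma wt_meetE x y : wt (meet x y) = #|[set k | x ord0 k && y ord0 k]|.
Proof. by apply: eq_card => k; rewrite !inE mxE. Qed.

Lemma meetC x y : meet x y = meet y x.
Proof. by apply/rowP => k; rewrite !mxE andbC. Qed.

Lemma vle_meetl x y : vle (meet x y) x.
Proof. by move=> k; rewrite mxE => /andP[]. Qed.

Lemma vle_meetr x y : vle (meet x y) y.
Proof. by rewrite meetC; apply: vle_meetl. Qed.

Lemma hdist_wt_meet x y : hdist x y + 2 * wt (meet x y) = wt x + wt y.
Proof.
rewrite wt_meetE /hdist /wt !card_set_sum big_distrr -!big_split /=.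
by apply: eq_bigr => k _; case: (x ord0 k); case: (y ord0 k).
Qed.

Lemma hdistC x y : hdist x y = hdist y x.
Proof. by apply: eq_card => k; rewrite !inE eq_sym. Qed.

Lemma hdist_triangle x y z : hdist x z <= hdist x y + hdist y z.
Proof.
rewrite /hdist !card_set_sum -big_split; apply: leq_sum => k _ /=.
by case: (x ord0 k); case: (y ord0 k); case: (z ord0 k).
Qed.

Lemma hdist_meet x y : hdist x y = hdist (meet x y) x + hdist (meet x y) y.
Proof.
rewrite /hdist !card_set_sum -big_split; apply: eq_bigr => k _ /=; rewrite mxE.
by case: (x ord0 k); case: (y ord0 k).
Qed.

Lemma hdist_zero x {z} : zero_row z -> hdist x z = wt x.
Proof. by move=> z0; apply: eq_card => k; rewrite !inE z0; case: (x ord0 k). Qed.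

Lemma hdist_ones x {o} : ones_row o -> hdist x o + wt x = m.
Proof.
move=> o1; rewrite /hdist /wt !card_set_sum -big_split /=.
transitivity (\sum_(k < m) 1); last by rewrite sum1_card card_ord.
by apply: eq_bigr => k _; rewrite o1; case: (x ord0 k).
Qed.

Lemma vle_antisym {x y} : vle x y -> vle y x -> x = y.
Proof.
by move=> xy yx; apply/rowP => k; apply/idP/idP; [apply: xy | apply: yx].
Qed.

Lemma vle_meet_id {x y} : vle x y -> meet x y = x.
Proof.
by move=> xy; apply/rowP => k; rewrite mxE; case xk: (x ord0 k); rewrite ?(xy k xk).
Qed.

Lemma vle_wt_meet {x y} : wt x <= wt (meet x y) -> vle x y.
Proof.
move=> le_xm; have sub : [set k | meet x y ord0 k] \subset [set k | x ord0 k].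
  by apply/subsetP => k; rewrite !inE; apply: vle_meetl.
have /eqP eq_sets : [set k | meet x y ord0 k] == [set k | x ord0 k].
  by rewrite -(subset_leqif_cards sub).2 eqn_leq (subset_leq_card sub).
move=> k xk; apply: (vle_meetr x y k).
have : k \in [set k | x ord0 k] by rewrite inE.
by rewrite -eq_sets inE.
Qed.

Lemma hdist_vle {x y} : vle x y -> hdist x y + wt x = wt y.
Proof. by move=> xy; have := hdist_wt_meet x y; rewrite vle_meet_id //; lia. Qed.

Lemma eq_of_wt_meet x y :
  wt x = wt y -> wt x <= wt (meet x y) -> x = y.
Proof.
move=> wt_xy le_xm; apply: vle_antisym; first exact: vle_wt_meet.
by apply: vle_wt_meet; rewrite meetC -wt_xy.
Qed.

End BooleanVectors.

Lemma mxv_wt_meet N m (A : 'M[bool]_(N, m)) u i : mxv A u i = wt (meet (row i A) u).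
Proof. by rewrite wt_meetE; apply: eq_card => k; rewrite !inE mxE. Qed.

Section Maps.
Context {m : nat}.
Implicit Types x y u : 'rV[bool]_m.
Variable f : 'rV[bool]_m -> 'rV[bool]_m.

Definition nonexpansive := forall x y, hdist (f x) (f y) <= hdist x y.
Definition wt_preserving := forall u, wt u = wt (f u).
Definition monotone := forall x y, vle x y -> vle (f x) (f y).

Lemma nonexpansive_wt_preserving {z o} :
  zero_row z -> ones_row o -> zero_row (f z) -> ones_row (f o) ->
  nonexpansive -> wt_preserving.
Proof.
move=> z0 o1 fz0 fo1 f_ne u.
have := f_ne u z; rewrite !hdist_zero //.
have := f_ne u o; have := hdist_ones u o1; have := hdist_ones (f u) fo1; lia.
Qed.

Lemma nonexpansive_wt_meet x y : wt_preserving -> nonexpansive ->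
  wt (meet x y) <= wt (meet (f x) (f y)).
Proof.
move=> f_wt f_ne; have := f_ne x y.
have := hdist_wt_meet x y; have := hdist_wt_meet (f x) (f y).
have := f_wt x; have := f_wt y; lia.
Qed.

Lemma nonexpansive_monotone : wt_preserving -> nonexpansive -> monotone.
Proof.
move=> f_wt f_ne x y xy; apply: vle_wt_meet.
by rewrite -f_wt -{1}(vle_meet_id xy); apply: nonexpansive_wt_meet.
Qed.

Lemma monotone_nonexpansive : wt_preserving -> monotone -> nonexpansive.
Proof.
move=> f_wt f_mono x y; have zx := vle_meetl x y; have zy := vle_meetr x y.
rewrite (hdist_meet x y).
have := hdist_triangle (f x) (f (meet x y)) (f y); rewrite (hdistC (f x) (f (meet x y))).
have := hdist_vle zx; have := hdist_vle zy.
have := hdist_vle (f_mono _ _ zx); have := hdist_vle (f_mono _ _ zy).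
have := f_wt x; have := f_wt y; have := f_wt (meet x y); lia.
Qed.

End Maps.

Section CenteredPair.
Variables (N m : nat) (L R : 'M[bool]_(N.+1, m)).
Hypotheses (L_R_in : inP L R) (L_R_centered : centered L R).
Implicit Type f : 'rV[bool]_m -> 'rV[bool]_m.

Lemma contraction_inclusion_dominance f :
  contraction_map L R f -> inclusion_dominance_map L R f.
Proof.
case: L_R_in L_R_centered => [p [Lp0 Rp0]] [bal [o [Lo1 Ro1]]] [f_rows f_ne].
have f_wt : wt_preserving f.
  by apply: (nonexpansive_wt_preserving f Lp0 Lo1); rewrite ?f_rows.
split; last exact: nonexpansive_monotone.
move=> u; split=> [|i]; first exact: f_wt.
by rewrite !mxv_wt_meet -f_rows; apply: nonexpansive_wt_meet.
Qed.

Lemma inclusion_dominance_contraction f :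
  inclusion_dominance_map L R f -> contraction_map L R f.
Proof.
case: L_R_centered => bal _ [f_dom f_mono].
have f_wt : wt_preserving f by move=> u; case: (f_dom u).
split; last exact: monotone_nonexpansive.
move=> i; have [wt_fLi] := f_dom (row i L); move/(_ i).
rewrite !mxv_wt_meet vle_meet_id // => dom_i.
by apply/esym/eq_of_wt_meet; rewrite -bal.
Qed.

End CenteredPair.

Theorem theorem2 (N m : nat) (L R : 'M[bool]_(N.+1, m)) :
  inP L R -> centered L R ->
  (forall f : 'rV[bool]_m -> 'rV[bool]_m,
      contraction_map L R f <-> inclusion_dominance_map L R f) /\
  ((exists f, contraction_map L R f) <-> (exists f, inclusion_dominance_map L R f)).
Proof.
move=> L_R_in L_R_centered.
have equiv f : contraction_map L R f <-> inclusion_dominance_map L R f.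
  split; [exact: contraction_inclusion_dominance | exact: inclusion_dominance_contraction].
by split=> //; split=> -[f /equiv]; exists f.
Qed.
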